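(* Let $s_\varepsilon$ and $s$ be as defined below. Then $s_\varepsilon\to s$ as $\varepsilon\to0$, uniformly on compact subsets of $\mathbb{R}^4$.
   Context: Strict delta net: a net $(\delta_\varepsilon)_{\varepsilon\in(0,1]}$ of smooth compactly supported functions on $\mathbb{R}$ with $\operatorname{supp}\delta_\varepsilon\subseteq[-\varepsilon,\varepsilon]$, $\int\delta_\varepsilon\to1$ as $\varepsilon\to0$, and $\int|\delta_\varepsilon|\le C$ for some $C>0$ and small $\varepsilon$. Fix $f\in C^\infty(\mathbb{R}^2,\mathbb{R})$ and a strict delta net $(\delta_\varepsilon)_\varepsilon$; write $X=(X^1,X^2)$. Let $(x_\varepsilon)_\varepsilon=(x_\varepsilon^1,x_\varepsilon^2)_\varepsilon\in C^\infty(\mathbb{R}^2\times\mathbb{R},\mathbb{R}^2)^{(0,1]}$ be a fixed net such that for every compact $K\subseteq\mathbb{R}^2$ there is $\varepsilon_K$ such that for all $X\in K$ and $\varepsilon\le\varepsilon_K$, $U\mapsto x_\varepsilon(X,U)$ is the solution on all of $\mathbb{R}$ of $\partial_U^2x_\varepsilon^i(X,U)=\frac12\partial_if(x_\varepsilon(X,U))\,\delta_\varepsilon(U)$, $x_\varepsilon^i(X,-1)=X^i$, $\partial_Ux_\varepsilon^i(X,-1)=0$ ($i=1,2$). Write $\dot x_\varepsilon^i=\partial_U x_\varepsilon^i$ and define $$w_\varepsilon(X,V,U)=V+\int_{-\varepsilon}^U\int_{-\varepsilon}^s\sum_{i=1}^2\partial_if(x_\varepsilon(X,r))\,\dot x_\varepsilon^i(X,r)\,\delta_\varepsilon(r)\,dr\,ds,$$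 $s_\varepsilon(U,X^1,X^2,V)=(U,x_\varepsilon^1(X,U),x_\varepsilon^2(X,U),w_\varepsilon(X,V,U))$. With $U_+=\max(U,0)$, let $x^i(X,U)=X^i+\frac12\partial_if(X)U_+$, $w(X,V,U)=V+\frac14\sum_{i=1}^2(\partial_if(X))^2U_+$ and $s(U,X^1,X^2,V)=(U,x^1(X,U),x^2(X,U),w(X,V,U))$. *)

From Stdlib Require Import Reals Lra List ClassicalEpsilon.
Open Scope R_scope.

(** Total version of the (oriented) Riemann integral: equals [RiemannInt pr]
    whenever [f] is Riemann integrable between [a] and [b] (for any proof [pr];
    the value does not depend on [pr] by [RiemannInt_P5]). *)
Definition RInt (f : R -> R) (a b : R) : R :=
  epsilon (inhabits 0) (fun v => exists pr : Riemann_integrable f a b, RiemannInt pr = v).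

Definition dist2 (p q : R * R) : R :=
  Rmax (Rabs (fst p - fst q)) (Rabs (snd p - snd q)).
Definition dist4 (p q : R * R * R * R) : R :=
  let '(a1, a2, a3, a4) := p in let '(b1, b2, b3, b4) := q in
  Rmax (Rmax (Rabs (a1 - b1)) (Rabs (a2 - b2))) (Rmax (Rabs (a3 - b3)) (Rabs (a4 - b4))).

Definition is_open {T : Type} (d : T -> T -> R) (O : T -> Prop) : Prop :=
  forall p, O p -> exists r, 0 < r /\ forall q, d p q < r -> O q.

Definition is_compact {T : Type} (d : T -> T -> R) (K : T -> Prop) : Prop :=
  forall (I : Type) (O : I -> T -> Prop),
    (forall i, is_open d (O i)) ->
    (forall p, K p -> exists i, O i p) ->
    exists l : list I, forall p, K p -> exists i, In i l /\ O i p.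

Definition smooth1 (g : R -> R) : Prop :=
  exists D : nat -> R -> R, D 0%nat = g /\
    forall n x, derivable_pt_lim (D n) x (D (S n) x).

(* functions of two real variables; direction [true] = 1st variable, [false] = 2nd *)
Definition pd2 (F : R -> R -> R) (d : bool) (G : R -> R -> R) : Prop :=
  forall a b, if d then derivable_pt_lim (fun t => F t b) a (G a b)
              else derivable_pt_lim (fun t => F a t) b (G a b).
Definition cont2 (F : R -> R -> R) : Prop :=
  forall a b e, 0 < e -> exists r, 0 < r /\ forall a' b',
    Rabs (a' - a) < r -> Rabs (b' - b) < r -> Rabs (F a' b' - F a b) < e.
Definition smooth2 (F : R -> R -> R) : Prop :=
  exists D : list bool -> R -> R -> R, D nil = F /\
    (forall l, cont2 (D l)) /\ (forall l d, pd2 (D l) d (D (d :: l))).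

Inductive dir3 := Dir1 | Dir2 | Dir3.
Definition pd3 (F : R -> R -> R -> R) (d : dir3) (G : R -> R -> R -> R) : Prop :=
  forall a b c, match d with
    | Dir1 => derivable_pt_lim (fun t => F t b c) a (G a b c)
    | Dir2 => derivable_pt_lim (fun t => F a t c) b (G a b c)
    | Dir3 => derivable_pt_lim (fun t => F a b t) c (G a b c)
    end.
Definition cont3 (F : R -> R -> R -> R) : Prop :=
  forall a b c e, 0 < e -> exists r, 0 < r /\ forall a' b' c',
    Rabs (a' - a) < r -> Rabs (b' - b) < r -> Rabs (c' - c) < r ->
    Rabs (F a' b' c' - F a b c) < e.
Definition smooth3 (F : R -> R -> R -> R) : Prop :=
  exists D : list dir3 -> R -> R -> R -> R, D nil = F /\
    (forall l, cont3 (D l)) /\ (forall l d, pd3 (D l) d (D (d :: l))).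

Definition strict_delta_net (delta : R -> R -> R) : Prop :=
  (forall eps, 0 < eps <= 1 -> smooth1 (delta eps)) /\
  (forall eps, 0 < eps <= 1 -> forall u, eps < Rabs u -> delta eps u = 0) /\
  (forall eta, 0 < eta -> exists e0, 0 < e0 /\ forall eps, 0 < eps <= 1 -> eps <= e0 ->
      Rabs (RInt (delta eps) (- eps) eps - 1) < eta) /\
  (exists C e1, 0 < C /\ 0 < e1 /\ forall eps, 0 < eps <= 1 -> eps <= e1 ->
      RInt (fun u => Rabs (delta eps u)) (- eps) eps <= C).

Definition Upos (U : R) : R := Rmax U 0.

(** w_ε(X,V,U); df1, df2 = ∂_1 f, ∂_2 f; x1,x2 = x_ε; xd1,xd2 = ∂_U x_ε. *)
Definition w_eps (df1 df2 : R -> R -> R) (delta : R -> R -> R)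
  (x1 x2 xd1 xd2 : R -> R -> R -> R -> R) (eps X1 X2 V U : R) : R :=
  V + RInt (fun s => RInt (fun r =>
          (df1 (x1 eps X1 X2 r) (x2 eps X1 X2 r) * xd1 eps X1 X2 r
         + df2 (x1 eps X1 X2 r) (x2 eps X1 X2 r) * xd2 eps X1 X2 r) * delta eps r)
        (- eps) s) (- eps) U.

Definition s_eps (df1 df2 : R -> R -> R) (delta : R -> R -> R)
  (x1 x2 xd1 xd2 : R -> R -> R -> R -> R) (eps : R) (p : R * R * R * R)
  : R * R * R * R :=
  let '(U, X1, X2, V) := p in
  (U, x1 eps X1 X2 U, x2 eps X1 X2 U, w_eps df1 df2 delta x1 x2 xd1 xd2 eps X1 X2 V U).

Definition s_lim (df1 df2 : R -> R -> R) (p : R * R * R * R) : R * R * R * R :=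
  let '(U, X1, X2, V) := p in
  (U, X1 + / 2 * df1 X1 X2 * Upos U, X2 + / 2 * df2 X1 X2 * Upos U,
   V + / 4 * ((df1 X1 X2) ^ 2 + (df2 X1 X2) ^ 2) * Upos U).

(* For X in a compact set and eps small, the trajectory x_eps(X, .) rests at X until the kick
   (supported in [-eps, eps]) and moves with its constant exit velocity afterwards.  A bootstrap
   bounds its speed during the kick by (M + 1)/2 * int |delta_eps|, so it moves by O(eps) and
   grad f stays eta-close to grad f(X); hence the exit velocity is within
   O(eta + |int delta_eps - 1|) of grad f(X) / 2.  Since (xd_i^2)' = d_i f(x) xd_i delta_eps, the
   double integral in w_eps is the kinetic energy |xd_eps|^2 integrated from -eps, which is
   compared with |grad f(X)|^2 U_+ / 4 in the same way.  Compactness makes all constants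
   uniform. *)

From Stdlib Require Import Reals Lra List ClassicalEpsilon Classical FunctionalExtensionality.
From Stdlib Require Import ZArith Lia.
Open Scope R_scope.

Lemma continuity_pt_epsilon_delta (f : R -> R) x :
  continuity_pt f x <->
  forall e, 0 < e -> exists d, 0 < d /\ forall y, Rabs (y - x) < d -> Rabs (f y - f x) < e.
Proof.
  split.
  - intros H e He. destruct (H e He) as [d [Hd H1]]. exists d; split; auto.
    intros y Hy. destruct (Req_dec y x) as [->|Hne].
    + unfold Rminus; rewrite Rplus_opp_r, Rabs_R0; auto.
    + apply (H1 y). split; [split; [exact I | auto] | exact Hy].
  - intros H e He. destruct (H e He) as [d [Hd H1]]. exists d; split; auto.
    intros y [_ Hy]. apply H1. exact Hy.
Qed.

Lemma derivable_pt_lim_continuity_pt f x l : derivable_pt_lim f x l -> continuity_pt f x.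
Proof. intro H. apply derivable_continuous_pt. exists l. exact H. Qed.

Lemma derivable_pt_lim_eq f x l l' : derivable_pt_lim f x l -> l = l' -> derivable_pt_lim f x l'.
Proof. intros H ->; exact H. Qed.

Lemma derivable_pt_lim_sq f x l :
  derivable_pt_lim f x l -> derivable_pt_lim (fun s => f s ^ 2) x (2 * f x * l).
Proof.
  intros H. apply (derivable_pt_lim_eq _ _ _ _ (derivable_pt_lim_comp f (fun y => y ^ 2) x l _ H
    (derivable_pt_lim_pow (f x) 2))).
  simpl. ring.
Qed.

Lemma continuity_pt_Rabs f x : continuity_pt f x -> continuity_pt (fun s => Rabs (f s)) x.
Proof. intros H. apply (continuity_pt_comp f Rabs); auto. apply Rcontinuity_abs. Qed.

Lemma continuity_pt_cont2 (g : R -> R -> R) u v x :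
  cont2 g -> continuity_pt u x -> continuity_pt v x -> continuity_pt (fun s => g (u s) (v s)) x.
Proof.
  intros Hg Hu Hv. apply continuity_pt_epsilon_delta. intros e He.
  destruct (Hg (u x) (v x) e He) as [r [Hr Hr2]].
  destruct (proj1 (continuity_pt_epsilon_delta u x) Hu r Hr) as [d1 [Hd1 H1]].
  destruct (proj1 (continuity_pt_epsilon_delta v x) Hv r Hr) as [d2 [Hd2 H2]].
  exists (Rmin d1 d2). split; [apply Rmin_pos; auto|]. intros y Hy.
  pose proof (Rmin_l d1 d2). pose proof (Rmin_r d1 d2).
  apply Hr2; [apply H1 | apply H2]; lra.
Qed.

Lemma cont2_of_partial_derivative (F G : R -> R -> R) d : smooth2 F -> pd2 F d G -> cont2 G.
Proof.
  intros [D [HD0 [HDc HDd]]] Hp.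
  assert (E : forall a b, G a b = D (d :: nil) a b).
  { intros a b. pose proof (HDd nil d a b) as H1. pose proof (Hp a b) as H2. rewrite HD0 in H1.
    destruct d; eapply uniqueness_limite; eauto. }
  intros a b e He. destruct (HDc (d :: nil) a b e He) as [r [Hr Hr2]]. exists r; split; auto.
  intros. rewrite !E. auto.
Qed.

Lemma smooth1_continuity_pt g : smooth1 g -> forall x, continuity_pt g x.
Proof.
  intros [D [HD0 HD]] x. rewrite <- HD0. eapply derivable_pt_lim_continuity_pt. apply HD.
Qed.

Lemma Riemann_integrable_continuity (g : R -> R) :
  (forall x, continuity_pt g x) -> forall a b, Riemann_integrable g a b.
Proof.
  intros Hg a b. destruct (Rle_dec a b).
  - apply continuity_implies_RiemannInt; auto.
  - apply RiemannInt_P1. apply continuity_implies_RiemannInt; auto. lra.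
Qed.

Lemma RInt_RiemannInt g a b (pr : Riemann_integrable g a b) : RInt g a b = RiemannInt pr.
Proof.
  unfold RInt.
  destruct (epsilon_spec (inhabits 0)
    (fun v => exists pr : Riemann_integrable g a b, RiemannInt pr = v)) as [pr' Hpr'].
  - exists (RiemannInt pr), pr. reflexivity.
  - rewrite <- Hpr'. apply RiemannInt_P5.
Qed.

Section ContinuousIntegrand.
Variable g : R -> R.
Hypothesis g_cont : forall x, continuity_pt g x.

Lemma RInt_Chasles a b c : RInt g a b + RInt g b c = RInt g a c.
Proof.
  pose proof (Riemann_integrable_continuity g g_cont) as Hi.
  rewrite (RInt_RiemannInt g a b (Hi a b)), (RInt_RiemannInt g b c (Hi b c)),
    (RInt_RiemannInt g a c (Hi a c)).
  apply RiemannInt_P26.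
Qed.

Lemma RInt_same a : RInt g a a = 0.
Proof. pose proof (RInt_Chasles a a a). lra. Qed.

Lemma derivable_pt_lim_RInt a x : derivable_pt_lim (fun t => RInt g a t) x (g x).
Proof.
  assert (h : x - 1 <= x + 1) by lra.
  assert (C0 : forall y, x - 1 <= y <= x + 1 -> continuity_pt g y) by auto.
  apply derivable_pt_lim_locally_ext with
    (f := fun t => RInt g a (x - 1) + primitive h (FTC_P1 h C0) t) (a := x - 1) (b := x + 1).
  - lra.
  - intros z Hz. rewrite <- (RInt_Chasles a (x - 1) z). f_equal.
    unfold primitive. destruct (Rle_dec (x - 1) z); [|lra]. destruct (Rle_dec z (x + 1)); [|lra].
    symmetry; apply RInt_RiemannInt.
  - apply (derivable_pt_lim_eq _ _ (0 + g x)); [|ring].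
    apply (derivable_pt_lim_plus (fun _ => RInt g a (x - 1)) (primitive h (FTC_P1 h C0))).
    + apply derivable_pt_lim_const.
    + apply RiemannInt_P28. lra.
Qed.

End ContinuousIntegrand.
(** * Mean-value estimates *)

Lemma Rabs_le_between a b : Rabs a <= b -> - b <= a <= b.
Proof. intros H. pose proof (Rle_abs a). pose proof (Rle_abs (- a)). rewrite Rabs_Ropp in *. lra. Qed.

Lemma deriv_domination (g g' h h' : R -> R) a b : a <= b ->
  (forall c, a <= c <= b -> derivable_pt_lim g c (g' c) /\ derivable_pt_lim h c (h' c)
     /\ Rabs (g' c) <= h' c) ->
  Rabs (g b - g a) <= h b - h a.
Proof.
  intros [Hab | <-] H; [| unfold Rminus; rewrite !Rplus_opp_r, Rabs_R0; lra].
  destruct (MVT_cor2 (fun t => g t - h t) (fun t => g' t - h' t) a b Hab) as [c1 [E1 I1]].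
  { intros c Hc. destruct (H c Hc) as [H1 [H2 _]]. apply (derivable_pt_lim_minus g h); auto. }
  destruct (MVT_cor2 (fun t => g t + h t) (fun t => g' t + h' t) a b Hab) as [c2 [E2 I2]].
  { intros c Hc. destruct (H c Hc) as [H1 [H2 _]]. apply (derivable_pt_lim_plus g h); auto. }
  destruct (H c1 ltac:(lra)) as [_ [_ B1%Rabs_le_between]].
  destruct (H c2 ltac:(lra)) as [_ [_ B2%Rabs_le_between]].
  assert (0 <= (h' c1 - g' c1) * (b - a)) by (apply Rmult_le_pos; lra).
  assert (0 <= (g' c2 + h' c2) * (b - a)) by (apply Rmult_le_pos; lra).
  apply Rabs_le; lra.
Qed.

Lemma deriv_zero_const (g : R -> R) a b :
  (forall c, Rmin a b <= c <= Rmax a b -> derivable_pt_lim g c 0) -> g a = g b.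
Proof.
  intros H.
  assert (Hab : forall a b, a <= b -> (forall c, a <= c <= b -> derivable_pt_lim g c 0) ->
    g a = g b).
  { clear. intros a b Hab H.
    pose proof (deriv_domination g (fun _ => 0) (fun _ => 0) (fun _ => 0) a b Hab) as T.
    assert (Rabs (g b - g a) <= 0 - 0).
    { apply T. intros c Hc. rewrite Rabs_R0.
      repeat split; [auto | apply derivable_pt_lim_const | lra]. }
    apply Rabs_le_between in H0. lra. }
  destruct (Rle_dec a b).
  - rewrite Rmin_left, Rmax_right in H by lra. auto.
  - rewrite Rmin_right, Rmax_left in H by lra. symmetry. apply Hab; auto. lra.
Qed.

Lemma deriv_zero_const_left (g : R -> R) b :
  (forall c, c <= b -> derivable_pt_lim g c 0) -> forall r s, r <= b -> s <= b -> g r = g s.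
Proof.
  intros Hg r s Hr Hs. apply deriv_zero_const. intros c Hc.
  pose proof (Rmax_lub r s b Hr Hs). apply Hg. lra.
Qed.

Lemma deriv_zero_const_right (g : R -> R) a :
  (forall c, a <= c -> derivable_pt_lim g c 0) -> forall r s, a <= r -> a <= s -> g r = g s.
Proof.
  intros Hg r s Hr Hs. apply deriv_zero_const. intros c Hc.
  pose proof (Rmin_glb r s a Hr Hs). apply Hg. lra.
Qed.

Lemma deriv_bound_Lipschitz (x v : R -> R) a t B : a <= t ->
  (forall c, derivable_pt_lim x c (v c)) -> (forall c, a <= c <= t -> Rabs (v c) <= B) ->
  Rabs (x t - x a) <= B * (t - a).
Proof.
  intros Ha Hx Hv. replace (B * (t - a)) with (B * t - B * a) by ring.
  apply (deriv_domination x v (fun s => B * s) (fun _ => B) a t Ha).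
  intros c Hc. repeat split; auto.
  apply (derivable_pt_lim_eq _ _ (B * 1)); [|ring].
  apply (derivable_pt_lim_scal id), derivable_pt_lim_id.
Qed.

(* The supremum of the times up to which the strict bound holds can only be [b]. *)
Lemma continuous_induction (phi : R -> R) a b c : a <= b ->
  (forall x, continuity_pt phi x) -> phi a < c ->
  (forall t, a <= t <= b -> (forall r, a <= r <= t -> phi r <= c) -> phi t < c) ->
  forall t, a <= t <= b -> phi t < c.
Proof.
  intros Hab Hc Ha Hstep.
  set (E := fun s => a <= s <= b /\ forall r, a <= r <= s -> phi r < c).
  assert (Ea : E a) by (split; [lra | intros r Hr; replace r with a by lra; exact Ha]).
  destruct (completeness E) as [m [Hub Hlub]].
  { exists b. intros s [Hs _]. lra. }
  { exists a. exact Ea. }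
  assert (Ham : a <= m) by (apply Hub, Ea).
  assert (Hmb : m <= b) by (apply Hlub; intros s [Hs _]; lra).
  assert (Hbelow : forall r, a <= r < m -> phi r < c).
  { intros r Hr. apply NNPP. intro Hn.
    assert (m <= r); [|lra].
    apply Hlub. intros s [Hs Hs2]. destruct (Rle_dec s r); auto.
    exfalso. apply Hn, Hs2. lra. }
  assert (Hm : phi m < c).
  { apply Hstep; [lra|]. intros r Hr. destruct (Req_dec r m) as [->|]; [|left; apply Hbelow; lra].
    destruct (Rle_dec (phi m) c) as [|Hgt%Rnot_le_lt]; auto. exfalso.
    destruct (Req_dec a m) as [<-|Hneq]; [lra|].
    destruct (proj1 (continuity_pt_epsilon_delta phi m) (Hc m) (phi m - c)) as [d [Hd Hd2]]; [lra|].
    set (r := Rmax a (m - d / 2)).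
    assert (Har : a <= r < m) by (split; [apply Rmax_l | apply Rmax_lub_lt; lra]).
    assert (Hrm : Rabs (r - m) < d).
    { rewrite Rabs_left by lra. pose proof (Rmax_r a (m - d / 2)) as Hr'; fold r in Hr'. lra. }
    pose proof (Hd2 r Hrm) as Hclose. pose proof (Hbelow r Har).
    pose proof (Rle_abs (phi m - phi r)). rewrite Rabs_minus_sym in Hclose. lra. }
  assert (Hmb' : m = b).
  { destruct (Req_dec m b); auto. exfalso.
    destruct (proj1 (continuity_pt_epsilon_delta phi m) (Hc m) (c - phi m)) as [d [Hd Hd2]]; [lra|].
    set (s := Rmin b (m + d / 2)).
    assert (Hms : m < s) by (apply Rmin_glb_lt; lra).
    assert (Es : E s).
    { split; [split; [lra | apply Rmin_l]|].
      intros r Hr. destruct (Rlt_le_dec r m); [apply Hbelow; lra|].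
      assert (Hrm : Rabs (r - m) < d).
      { rewrite Rabs_right by lra. pose proof (Rmin_r b (m + d / 2)) as Hs'; fold s in Hs'. lra. }
      pose proof (Hd2 r Hrm). pose proof (Rle_abs (phi r - phi m)). lra. }
    pose proof (Hub s Es). lra. }
  intros t Ht. subst m. destruct (Req_dec t b) as [->|]; auto. apply Hbelow; lra.
Qed.

Lemma continuous_zero_outside (g : R -> R) eps : (forall x, continuity_pt g x) ->
  (forall u, eps < Rabs u -> g u = 0) -> forall u, eps <= Rabs u -> g u = 0.
Proof.
  intros Hc Hz u [Hu|Hu]; auto.
  apply NNPP. intro Hn. assert (Hp : 0 < Rabs (g u)) by (apply Rabs_pos_lt; auto).
  destruct (proj1 (continuity_pt_epsilon_delta g u) (Hc u) _ Hp) as [d [Hd Hd2]].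
  set (u' := if Rle_dec 0 u then u + d / 2 else u - d / 2).
  assert (Rabs (u' - u) < d /\ eps < Rabs u') as [Hu1 Hu2].
  { unfold u'. destruct (Rle_dec 0 u).
    - rewrite Rabs_right in Hu by lra. replace (u + d / 2 - u) with (d / 2) by ring.
      rewrite !Rabs_right by lra. lra.
    - rewrite Rabs_left in Hu by lra. replace (u - d / 2 - u) with (- (d / 2)) by ring.
      rewrite Rabs_Ropp, Rabs_right, Rabs_left by lra. lra. }
  pose proof (Hd2 u' Hu1) as H. rewrite (Hz u' Hu2), Rminus_0_l, Rabs_Ropp in H. lra.
Qed.

(** * Compactness *)

Lemma list_pos_lower_bound {A} (l : list A) (h : A -> R) : (forall x, In x l -> 0 < h x) ->
  exists m, 0 < m /\ forall x, In x l -> m <= h x.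
Proof.
  induction l as [|y l IH]; intros H.
  - exists 1. split; [lra | intros x []].
  - destruct IH as [m [Hm Hm2]]; [intros; apply H; right; auto|].
    exists (Rmin m (h y)). split; [apply Rmin_pos; auto; apply H; left; auto|].
    intros x [<-|Hx]; [apply Rmin_r | eapply Rle_trans; [apply Rmin_l | auto]].
Qed.

Lemma list_upper_bound {A} (l : list A) (h : A -> R) : exists M, forall x, In x l -> h x <= M.
Proof.
  induction l as [|y l [M HM]].
  - exists 0. intros x [].
  - exists (Rmax M (h y)).
    intros x [<-|Hx]; [apply Rmax_r | eapply Rle_trans; [apply HM; auto | apply Rmax_l]].
Qed.

Lemma compact_upper_bound {T} (d : T -> T -> R) (K : T -> Prop) (g : T -> R) :
  is_compact d K ->
  (forall p e, 0 < e -> exists r, 0 < r /\ forall q, d p q < r -> g q < g p + e) ->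
  exists M, forall p, K p -> g p <= M.
Proof.
  intros HK Hg.
  destruct (HK nat (fun n q => g q < INR n)) as [l Hl].
  - intros n p Hp. destruct (Hg p (INR n - g p)) as [r [Hr Hr2]]; [lra|].
    exists r. split; auto. intros q Hq. pose proof (Hr2 q Hq). lra.
  - intros p _. destruct (archimed (g p)) as [H1 _].
    exists (Z.to_nat (up (g p))).
    destruct (Z.lt_ge_cases (up (g p)) 0) as [Hz|Hz].
    + replace (Z.to_nat (up (g p))) with 0%nat by lia. simpl.
      assert (IZR (up (g p)) <= -1) by (apply IZR_le; lia). lra.
    + rewrite INR_IZR_INZ, Z2Nat.id by lia. auto.
  - destruct (list_upper_bound l INR) as [M HM]. exists M. intros p Hp.
    destruct (Hl p Hp) as [i [Hi Hi2]]. pose proof (HM i Hi). lra.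
Qed.

Lemma Rabs_triang_sub a b c : Rabs (a - c) <= Rabs (a - b) + Rabs (b - c).
Proof. replace (a - c) with ((a - b) + (b - c)) by ring. apply Rabs_triang. Qed.

Lemma dist2_triang p q r : dist2 p r <= dist2 p q + dist2 q r.
Proof.
  destruct p as [p1 p2], q as [q1 q2], r as [r1 r2]; unfold dist2; simpl.
  pose proof (Rabs_triang_sub p1 q1 r1). pose proof (Rabs_triang_sub p2 q2 r2).
  pose proof (Rmax_l (Rabs (p1 - q1)) (Rabs (p2 - q2))).
  pose proof (Rmax_r (Rabs (p1 - q1)) (Rabs (p2 - q2))).
  pose proof (Rmax_l (Rabs (q1 - r1)) (Rabs (q2 - r2))).
  pose proof (Rmax_r (Rabs (q1 - r1)) (Rabs (q2 - r2))).
  apply Rmax_lub; lra.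
Qed.

Lemma dist2_lt p1 p2 q1 q2 r :
  dist2 (p1, p2) (q1, q2) < r -> Rabs (q1 - p1) < r /\ Rabs (q2 - p2) < r.
Proof.
  unfold dist2; simpl. intros H. rewrite (Rabs_minus_sym q1), (Rabs_minus_sym q2).
  pose proof (Rmax_l (Rabs (p1 - q1)) (Rabs (p2 - q2))).
  pose proof (Rmax_r (Rabs (p1 - q1)) (Rabs (p2 - q2))). lra.
Qed.

Lemma dist2_le_sum p1 p2 q1 q2 :
  dist2 (p1, p2) (q1, q2) <= Rabs (q1 - p1) + Rabs (q2 - p2).
Proof.
  unfold dist2; simpl. rewrite (Rabs_minus_sym p1), (Rabs_minus_sym p2).
  pose proof (Rabs_pos (q1 - p1)). pose proof (Rabs_pos (q2 - p2)). apply Rmax_lub; lra.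
Qed.

Lemma compact_cont2_bounded (K : R * R -> Prop) (g : R -> R -> R) :
  is_compact dist2 K -> cont2 g -> exists M, 0 <= M /\ forall X1 X2, K (X1, X2) -> Rabs (g X1 X2) <= M.
Proof.
  intros HK Hg.
  destruct (compact_upper_bound dist2 K (fun p => Rabs (g (fst p) (snd p))) HK) as [M HM].
  - intros [p1 p2] e He. destruct (Hg p1 p2 e He) as [r [Hr Hr2]]. exists r. split; auto.
    intros [q1 q2] [Hq1 Hq2]%dist2_lt. simpl.
    pose proof (Hr2 q1 q2 Hq1 Hq2). pose proof (Rabs_triang_sub (g q1 q2) (g p1 p2) 0).
    rewrite !Rminus_0_r in *. lra.
  - exists (Rmax M 0). split; [apply Rmax_r|].
    intros X1 X2 H. pose proof (HM _ H). pose proof (Rmax_l M 0). simpl in *. lra.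
Qed.

(** Cover [K] by balls [B(p, r)] on whose doubles [g] oscillates by less than [eta / 2];
    the minimal radius of a finite subcover is a uniform modulus. *)
Lemma compact_cont2_uniform (K : R * R -> Prop) (g : R -> R -> R) :
  is_compact dist2 K -> cont2 g ->
  forall eta, 0 < eta -> exists rho, 0 < rho /\
    forall X Y, K X -> dist2 X Y < rho -> Rabs (g (fst Y) (snd Y) - g (fst X) (snd X)) < eta.
Proof.
  intros HK Hg eta Heta.
  set (O := fun (pr : (R * R) * R) q => let (p, r) := pr in 0 < r /\
     (forall z, dist2 p z < 2 * r -> Rabs (g (fst z) (snd z) - g (fst p) (snd p)) < eta / 2) /\
     dist2 p q < r).
  destruct (HK _ O) as [l Hl].
  - intros [p r] q [Hr [Hz Hq]]. exists (r - dist2 p q). split; [lra|].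
    intros q' Hq'. repeat split; auto. pose proof (dist2_triang p q q'). lra.
  - intros [p1 p2] _. destruct (Hg p1 p2 (eta / 2)) as [r [Hr Hr2]]; [lra|].
    exists ((p1, p2), r / 2). repeat split; [lra | |].
    + intros [z1 z2] Hz. replace (2 * (r / 2)) with r in Hz by field.
      destruct (dist2_lt _ _ _ _ _ Hz). apply Hr2; auto.
    + unfold dist2; simpl. unfold Rminus; rewrite !Rplus_opp_r, Rabs_R0, Rmax_left; lra.
  - destruct (list_pos_lower_bound l (fun x => if Rlt_dec 0 (snd x) then snd x else 1))
      as [m [Hm Hm2]].
    { intros [p r] _. simpl. destruct (Rlt_dec 0 r); lra. }
    exists m. split; auto. intros X Y HX HXY.
    destruct (Hl X HX) as [[p r] [Hin [Hr [Hz Hq]]]].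
    pose proof (Hm2 _ Hin) as Hmr. simpl in Hmr. destruct (Rlt_dec 0 r); [|lra].
    pose proof (Hz X ltac:(lra)). pose proof (dist2_triang p X Y).
    pose proof (Hz Y ltac:(lra)).
    pose proof (Rabs_triang_sub (g (fst Y) (snd Y)) (g (fst p) (snd p)) (g (fst X) (snd X))) as T.
    rewrite (Rabs_minus_sym (g (fst p) (snd p))) in T. lra.
Qed.

Lemma dist4_components p1 p2 p3 p4 q1 q2 q3 q4 :
  Rabs (p1 - q1) <= dist4 (p1, p2, p3, p4) (q1, q2, q3, q4) /\
  Rabs (p2 - q2) <= dist4 (p1, p2, p3, p4) (q1, q2, q3, q4) /\
  Rabs (p3 - q3) <= dist4 (p1, p2, p3, p4) (q1, q2, q3, q4) /\
  Rabs (p4 - q4) <= dist4 (p1, p2, p3, p4) (q1, q2, q3, q4).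
Proof.
  unfold dist4.
  pose proof (Rmax_l (Rabs (p1 - q1)) (Rabs (p2 - q2))).
  pose proof (Rmax_r (Rabs (p1 - q1)) (Rabs (p2 - q2))).
  pose proof (Rmax_l (Rabs (p3 - q3)) (Rabs (p4 - q4))).
  pose proof (Rmax_r (Rabs (p3 - q3)) (Rabs (p4 - q4))).
  pose proof (Rmax_l (Rmax (Rabs (p1 - q1)) (Rabs (p2 - q2))) (Rmax (Rabs (p3 - q3)) (Rabs (p4 - q4)))).
  pose proof (Rmax_r (Rmax (Rabs (p1 - q1)) (Rabs (p2 - q2))) (Rmax (Rabs (p3 - q3)) (Rabs (p4 - q4)))).
  repeat split; lra.
Qed.

Lemma dist4_le p1 p2 p3 p4 q1 q2 q3 q4 e :
  Rabs (p1 - q1) <= e -> Rabs (p2 - q2) <= e -> Rabs (p3 - q3) <= e -> Rabs (p4 - q4) <= e ->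
  dist4 (p1, p2, p3, p4) (q1, q2, q3, q4) <= e.
Proof. intros. unfold dist4. repeat apply Rmax_lub; auto. Qed.

Definition middle_proj (K : R * R * R * R -> Prop) (X : R * R) : Prop :=
  exists U V, K (U, fst X, snd X, V).

Lemma compact_middle_proj (K : R * R * R * R -> Prop) :
  is_compact dist4 K -> is_compact dist2 (middle_proj K).
Proof.
  intros HK I O HO Hcov.
  destruct (HK I (fun i p => let '(U, X1, X2, V) := p in O i (X1, X2))) as [l Hl].
  - intros i [[[U X1] X2] V] Hp. destruct (HO i _ Hp) as [r [Hr Hr2]].
    exists r. split; auto. intros [[[U' X1'] X2'] V'] Hq. apply Hr2.
    destruct (dist4_components U X1 X2 V U' X1' X2' V') as [_ [A2 [A3 _]]].
    unfold dist2; simpl. apply Rmax_lub_lt; lra.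
  - intros [[[U X1] X2] V] Hp. destruct (Hcov (X1, X2)) as [i Hi]; [exists U, V; exact Hp|].
    exists i. exact Hi.
  - exists l. intros [Y1 Y2] [U [V Hp]]. destruct (Hl _ Hp) as [i [Hin Hi]]. exists i. auto.
Qed.

Lemma compact_first_bounded (K : R * R * R * R -> Prop) : is_compact dist4 K ->
  exists R0, 0 <= R0 /\ forall U X1 X2 V, K (U, X1, X2, V) -> Rabs U <= R0.
Proof.
  intros HK.
  destruct (compact_upper_bound dist4 K (fun p => let '(U, _, _, _) := p in Rabs U) HK) as [M HM].
  - intros [[[U X1] X2] V] e He. exists e. split; auto.
    intros [[[U' X1'] X2'] V'] Hq. destruct (dist4_components U X1 X2 V U' X1' X2' V') as [A1 _].
    pose proof (Rabs_triang_sub U' U 0). rewrite Rabs_minus_sym in A1. rewrite !Rminus_0_r in *.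
    lra.
  - exists (Rmax M 0). split; [apply Rmax_r|]. intros U X1 X2 V H.
    pose proof (HM _ H). pose proof (Rmax_l M 0). simpl in *. lra.
Qed.

(** * Response to a kick [v' = k dl / 2] by a short profile [dl] *)

Lemma RInt_Rabs_between (g : R -> R) a r b : (forall x, continuity_pt g x) -> a <= r <= b ->
  0 <= RInt (fun u => Rabs (g u)) a r <= RInt (fun u => Rabs (g u)) a b.
Proof.
  intros Hg Hr.
  assert (Hcont : forall x, continuity_pt (fun u => Rabs (g u)) x)
    by (intros; apply continuity_pt_Rabs; auto).
  set (H := fun t => RInt (fun u => Rabs (g u)) a t).
  assert (Hmono : forall s t, s <= t -> 0 <= H t - H s).
  { intros s t Hst.
    pose proof (deriv_domination (fun _ => 0) (fun _ => 0) H (fun u => Rabs (g u)) s t Hst) as T.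
    assert (Rabs (0 - 0) <= H t - H s); [|pose proof (Rabs_pos (0 - 0)); lra].
    apply T. intros c _. rewrite Rabs_R0.
    repeat split; [apply derivable_pt_lim_const | apply (derivable_pt_lim_RInt _ Hcont) | apply Rabs_pos]. }
  assert (H a = 0) by (apply RInt_same; auto).
  pose proof (Hmono a r ltac:(lra)). pose proof (Hmono r b ltac:(lra)). unfold H in *. lra.
Qed.

Section Kick.
Variables (dl v k : R -> R) (eps C : R).
Hypothesis eps_pos : 0 < eps.
Hypothesis dl_cont : forall u, continuity_pt dl u.
Hypothesis dl_mass : RInt (fun u => Rabs (dl u)) (-eps) eps <= C.
Hypothesis v_deriv : forall c, derivable_pt_lim v c (/ 2 * k c * dl c).
Hypothesis v_start : v (-eps) = 0.

Let mass r := RInt (fun u => Rabs (dl u)) (-eps) r.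

Let mass_deriv r : derivable_pt_lim mass r (Rabs (dl r)).
Proof. apply (derivable_pt_lim_RInt (fun u => Rabs (dl u))). intros; apply continuity_pt_Rabs; auto. Qed.

Let mass_start : mass (-eps) = 0.
Proof. apply RInt_same. intros; apply continuity_pt_Rabs; auto. Qed.

Lemma kick_velocity_bound M t : 0 <= M -> t <= eps ->
  (forall c, -eps <= c <= t -> Rabs (k c) <= M) ->
  forall r, -eps <= r <= t -> Rabs (v r) <= / 2 * M * C.
Proof.
  intros HM Ht Hk r Hr.
  assert (Hdom : Rabs (v r - v (-eps)) <= / 2 * M * mass r - / 2 * M * mass (-eps)).
  { apply (deriv_domination v (fun c => / 2 * k c * dl c) (fun s => / 2 * M * mass s)
      (fun s => / 2 * M * Rabs (dl s))); [lra|].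
    intros c Hc. repeat split; auto.
    - apply (derivable_pt_lim_scal mass), mass_deriv.
    - rewrite !Rabs_mult, Rabs_right by lra. pose proof (Hk c ltac:(lra)).
      pose proof (Rabs_pos (dl c)). apply Rmult_le_compat_r; auto. lra. }
  pose proof (RInt_Rabs_between dl (-eps) r eps dl_cont ltac:(lra)).
  assert (/ 2 * M * mass r <= / 2 * M * C) by (apply Rmult_le_compat_l; unfold mass; lra).
  rewrite v_start, mass_start, Rminus_0_r in Hdom. lra.
Qed.

(** Compare [v] with the response [k0 Dl / 2] to the frozen coefficient [k0], where [Dl] is
    the primitive of [dl]; at the exit time [Dl eps] is close to [1]. *)
Lemma kick_exit_velocity k0 eta theta : 0 <= eta ->
  Rabs (RInt dl (-eps) eps - 1) <= theta ->
  (forall c, -eps <= c <= eps -> Rabs (k c - k0) <= eta) ->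
  Rabs (v eps - / 2 * k0) <= / 2 * eta * C + Rabs (/ 2 * k0) * theta.
Proof.
  intros Heta Hth Hk.
  set (Dl := fun r => RInt dl (-eps) r).
  assert (Dl_deriv : forall r, derivable_pt_lim Dl r (dl r))
    by (intros; apply (derivable_pt_lim_RInt dl); auto).
  assert (Dl_start : Dl (-eps) = 0) by (apply RInt_same; auto).
  assert (Hdom : Rabs ((v eps - / 2 * k0 * Dl eps) - (v (-eps) - / 2 * k0 * Dl (-eps)))
           <= / 2 * eta * mass eps - / 2 * eta * mass (-eps)).
  { apply (deriv_domination (fun s => v s - / 2 * k0 * Dl s)
      (fun c => / 2 * k c * dl c - / 2 * k0 * dl c) (fun s => / 2 * eta * mass s)
      (fun s => / 2 * eta * Rabs (dl s))); [lra|].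
    intros c Hc. repeat split.
    - apply derivable_pt_lim_minus; auto. apply (derivable_pt_lim_scal Dl); auto.
    - apply (derivable_pt_lim_scal mass), mass_deriv.
    - replace (/ 2 * k c * dl c - / 2 * k0 * dl c) with (/ 2 * (k c - k0) * dl c) by ring.
      rewrite !Rabs_mult, Rabs_right by lra. pose proof (Hk c Hc).
      pose proof (Rabs_pos (dl c)). apply Rmult_le_compat_r; auto. lra. }
  rewrite v_start, Dl_start, mass_start in Hdom.
  assert (/ 2 * eta * mass eps <= / 2 * eta * C) by (apply Rmult_le_compat_l; unfold mass; lra).
  replace (v eps - / 2 * k0)
    with ((v eps - / 2 * k0 * Dl eps - (0 - / 2 * k0 * 0)) + / 2 * k0 * (Dl eps - 1)) by ring.
  eapply Rle_trans; [apply Rabs_triang|]. rewrite Rabs_mult.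
  assert (Rabs (/ 2 * k0) * Rabs (Dl eps - 1) <= Rabs (/ 2 * k0) * theta)
    by (apply Rmult_le_compat_l; [apply Rabs_pos | exact Hth]).
  lra.
Qed.

End Kick.

Lemma deriv_const_affine_right (g : R -> R) a m :
  (forall c, a <= c -> derivable_pt_lim g c m) -> forall r, a <= r -> g r = g a + m * (r - a).
Proof.
  intros Hg r Hr.
  assert (g r - m * r = g a - m * a); [|lra].
  apply (deriv_zero_const_right (fun s => g s - m * s) a); try lra. intros c Hc.
  apply (derivable_pt_lim_eq _ _ (m - m * 1)); [|ring].
  apply derivable_pt_lim_minus; [auto | apply (derivable_pt_lim_scal id), derivable_pt_lim_id].
Qed.

Lemma Upos_cases U eps : 0 < eps ->
  (U <= - eps /\ Upos U = 0) \/ (- eps <= U <= eps /\ 0 <= Upos U <= eps) \/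
  (eps <= U /\ Upos U = U).
Proof.
  intros He. unfold Upos. destruct (Rle_dec U (- eps)).
  - left. split; auto. apply Rmax_right. lra.
  - destruct (Rle_dec U eps).
    + right; left. split; [lra|]. destruct (Rle_dec U 0).
      * rewrite Rmax_right; lra.
      * rewrite Rmax_left; lra.
    + right; right. split; [lra | apply Rmax_left; lra].
Qed.

Lemma piecewise_position_error (x : R -> R) X A eps B a da R0 U v0 :
  0 < eps -> Rabs U <= R0 ->
  (forall r, r <= - eps -> x r = X) ->
  (forall r, - eps <= r <= eps -> Rabs (x r - X) <= 2 * B * eps) ->
  (forall r, eps <= r -> x r = x eps + v0 * (r - eps)) ->
  Rabs v0 <= B -> Rabs (v0 - A) <= da -> Rabs A <= a ->
  Rabs (x U - (X + A * Upos U)) <= (3 * B + a) * eps + R0 * da.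
Proof.
  intros He HU Hl Hm Hr Hv0 Hvd HA.
  assert (HB : 0 <= B) by (pose proof (Rabs_pos v0); lra).
  assert (Ha : 0 <= a) by (pose proof (Rabs_pos A); lra).
  assert (Hda : 0 <= da) by (pose proof (Rabs_pos (v0 - A)); lra).
  assert (0 <= R0) by (pose proof (Rabs_pos U); lra).
  assert (0 <= B * eps) by (apply Rmult_le_pos; lra).
  assert (0 <= a * eps) by (apply Rmult_le_pos; lra).
  assert (0 <= R0 * da) by (apply Rmult_le_pos; lra).
  destruct (Upos_cases U eps He) as [[HU1 HP]|[[HU1 HP]|[HU1 HP]]].
  - rewrite HP, Hl by auto. replace (X - (X + A * 0)) with 0 by ring. rewrite Rabs_R0. lra.
  - replace (x U - (X + A * Upos U)) with ((x U - X) - A * Upos U) by ring.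
    eapply Rle_trans; [apply Rabs_triang|].
    rewrite Rabs_Ropp, Rabs_mult, (Rabs_right (Upos U)) by lra.
    pose proof (Hm U HU1).
    assert (Rabs A * Upos U <= a * eps) by (apply Rmult_le_compat; try lra; apply Rabs_pos).
    lra.
  - rewrite HP, Hr by auto.
    replace (x eps + v0 * (U - eps) - (X + A * U))
      with ((x eps - X) + (v0 - A) * U - v0 * eps) by ring.
    eapply Rle_trans; [apply Rabs_triang|].
    eapply Rle_trans; [apply Rplus_le_compat_r, Rabs_triang|].
    rewrite Rabs_Ropp, !Rabs_mult, (Rabs_right eps) by lra.
    pose proof (Hm eps ltac:(lra)).
    assert (Rabs (v0 - A) * Rabs U <= da * R0)
      by (apply Rmult_le_compat; try lra; apply Rabs_pos).
    assert (Rabs v0 * eps <= B * eps) by (apply Rmult_le_compat_r; lra).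
    lra.
Qed.

Lemma Rabs_sq_le x b : Rabs x <= b -> x ^ 2 <= b ^ 2.
Proof. intros H%Rabs_le_between. nra. Qed.

Lemma piecewise_energy_error (G w : R -> R) eps B a da R0 U a1 a2 A1 A2 :
  0 < eps -> Rabs U <= R0 ->
  (forall s, derivable_pt_lim G s (w s)) -> G (- eps) = 0 ->
  (forall s, s <= - eps -> w s = 0) ->
  (forall s, - eps <= s <= eps -> Rabs (w s) <= 2 * B ^ 2) ->
  (forall s, eps <= s -> w s = a1 ^ 2 + a2 ^ 2) ->
  Rabs a1 <= B -> Rabs a2 <= B -> Rabs (a1 - A1) <= da -> Rabs (a2 - A2) <= da ->
  Rabs A1 <= a -> Rabs A2 <= a ->
  Rabs (G U - (A1 ^ 2 + A2 ^ 2) * Upos U) <= (6 * B ^ 2 + 2 * a ^ 2) * eps + 2 * R0 * da * (B + a).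
Proof.
  intros He HU HG HG0 Hwl Hwm Hwr Ha1 Ha2 Hd1 Hd2 HA1 HA2.
  assert (HB : 0 <= B) by (pose proof (Rabs_pos a1); lra).
  assert (Ha : 0 <= a) by (pose proof (Rabs_pos A1); lra).
  assert (Hda : 0 <= da) by (pose proof (Rabs_pos (a1 - A1)); lra).
  assert (0 <= R0) by (pose proof (Rabs_pos U); lra).
  assert (0 <= B ^ 2 * eps) by (apply Rmult_le_pos; [apply pow2_ge_0 | lra]).
  assert (0 <= a ^ 2 * eps) by (apply Rmult_le_pos; [apply pow2_ge_0 | lra]).
  assert (0 <= R0 * da * (B + a)) by (apply Rmult_le_pos; [apply Rmult_le_pos|]; lra).
  assert (HAs : 0 <= A1 ^ 2 + A2 ^ 2 <= 2 * a ^ 2).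
  { pose proof (Rabs_sq_le _ _ HA1). pose proof (Rabs_sq_le _ _ HA2).
    pose proof (pow2_ge_0 A1). pose proof (pow2_ge_0 A2). lra. }
  assert (Has : 0 <= a1 ^ 2 + a2 ^ 2 <= 2 * B ^ 2).
  { pose proof (Rabs_sq_le _ _ Ha1). pose proof (Rabs_sq_le _ _ Ha2).
    pose proof (pow2_ge_0 a1). pose proof (pow2_ge_0 a2). lra. }
  assert (GM : forall r, - eps <= r <= eps -> Rabs (G r) <= 4 * B ^ 2 * eps).
  { intros r Hr.
    assert (Hr' : Rabs (G r - G (- eps)) <= 2 * B ^ 2 * r - 2 * B ^ 2 * (- eps)).
    { apply (deriv_domination G w (fun s => 2 * B ^ 2 * s) (fun _ => 2 * B ^ 2)); [lra|].
      intros c Hc. repeat split; [auto| |apply Hwm; lra].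
      apply (derivable_pt_lim_eq _ _ (2 * B ^ 2 * 1)); [|ring].
      apply (derivable_pt_lim_scal id), derivable_pt_lim_id. }
    rewrite HG0, Rminus_0_r in Hr'.
    assert (2 * B ^ 2 * r <= 2 * B ^ 2 * eps)
      by (apply Rmult_le_compat_l; [pose proof (pow2_ge_0 B) | ]; lra).
    lra. }
  destruct (Upos_cases U eps He) as [[HU1 HP]|[[HU1 HP]|[HU1 HP]]].
  - rewrite HP. replace (G U) with (G (- eps)).
    + rewrite HG0. replace (0 - (A1 ^ 2 + A2 ^ 2) * 0) with 0 by ring. rewrite Rabs_R0. lra.
    + apply (deriv_zero_const_left G (- eps)); try lra.
      intros c Hc. rewrite <- (Hwl c Hc). apply HG.
  - eapply Rle_trans; [apply Rabs_triang|].
    rewrite Rabs_Ropp, Rabs_mult, (Rabs_right (Upos U)), (Rabs_right (A1 ^ 2 + A2 ^ 2)) by lra.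
    pose proof (GM U HU1).
    assert ((A1 ^ 2 + A2 ^ 2) * Upos U <= 2 * a ^ 2 * eps) by (apply Rmult_le_compat; lra).
    lra.
  - assert (HGr : G U = G eps + (a1 ^ 2 + a2 ^ 2) * (U - eps)).
    { apply deriv_const_affine_right; auto. intros c Hc. rewrite <- (Hwr c Hc). apply HG. }
    rewrite HP, HGr.
    replace (G eps + (a1 ^ 2 + a2 ^ 2) * (U - eps) - (A1 ^ 2 + A2 ^ 2) * U)
      with (G eps - (a1 ^ 2 + a2 ^ 2) * eps
            + ((a1 - A1) * (a1 + A1) + (a2 - A2) * (a2 + A2)) * U) by ring.
    assert (Hsum : forall b B', Rabs b <= B -> Rabs B' <= a -> Rabs (b + B') <= B + a).
    { intros. eapply Rle_trans; [apply Rabs_triang | lra]. }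
    assert (Q1 : Rabs ((a1 - A1) * (a1 + A1)) <= da * (B + a))
      by (rewrite Rabs_mult; apply Rmult_le_compat; try apply Rabs_pos; auto).
    assert (Q2 : Rabs ((a2 - A2) * (a2 + A2)) <= da * (B + a))
      by (rewrite Rabs_mult; apply Rmult_le_compat; try apply Rabs_pos; auto).
    assert (Q3 : Rabs (((a1 - A1) * (a1 + A1) + (a2 - A2) * (a2 + A2)) * U)
                 <= 2 * (da * (B + a)) * R0).
    { rewrite Rabs_mult. apply Rmult_le_compat; try apply Rabs_pos; auto.
      eapply Rle_trans; [apply Rabs_triang | lra]. }
    assert (Q4 : Rabs (G eps - (a1 ^ 2 + a2 ^ 2) * eps) <= 6 * B ^ 2 * eps).
    { eapply Rle_trans; [apply Rabs_triang|].
      rewrite Rabs_Ropp, Rabs_mult, (Rabs_right eps), (Rabs_right (_ + _)) by lra.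
      pose proof (GM eps ltac:(lra)).
      assert ((a1 ^ 2 + a2 ^ 2) * eps <= 2 * B ^ 2 * eps) by (apply Rmult_le_compat_r; lra).
      lra. }
    eapply Rle_trans; [apply Rabs_triang | lra].
Qed.

(** * A single trajectory through the kick *)

Lemma kicked_before (x v k dl : R -> R) X eps : eps <= 1 ->
  (forall c, derivable_pt_lim x c (v c)) -> (forall c, derivable_pt_lim v c (/ 2 * k c * dl c)) ->
  (forall c, c <= - eps -> dl c = 0) -> x (-1) = X -> v (-1) = 0 ->
  forall r, r <= - eps -> v r = 0 /\ x r = X.
Proof.
  intros Heps Hx Hv Hdl Hx0 Hv0.
  assert (Hvr : forall r, r <= - eps -> v r = 0).
  { intros r Hr. rewrite <- Hv0. apply (deriv_zero_const_left v (- eps)); try lra.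
    intros c Hc. apply (derivable_pt_lim_eq _ _ _ _ (Hv c)). rewrite Hdl by auto. ring. }
  intros r Hr. split; auto. rewrite <- Hx0. apply (deriv_zero_const_left x (- eps)); try lra.
  intros c Hc. rewrite <- (Hvr c Hc). apply Hx.
Qed.

Lemma kicked_after (x v k dl : R -> R) eps :
  (forall c, derivable_pt_lim x c (v c)) -> (forall c, derivable_pt_lim v c (/ 2 * k c * dl c)) ->
  (forall c, eps <= c -> dl c = 0) ->
  forall r, eps <= r -> v r = v eps /\ x r = x eps + v eps * (r - eps).
Proof.
  intros Hx Hv Hdl.
  assert (Hvr : forall r, eps <= r -> v r = v eps).
  { intros r Hr. apply (deriv_zero_const_right v eps); try lra.
    intros c Hc. apply (derivable_pt_lim_eq _ _ _ _ (Hv c)). rewrite Hdl by auto. ring. }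
  intros r Hr. split; auto. apply deriv_const_affine_right; auto.
  intros c Hc. rewrite <- (Hvr c Hc). apply Hx.
Qed.

(* Position plus energy error; [vmax] bounds the speed during the kick, [vlim] the limit
   speed and [dv] the error of the exit speed. *)
Definition trajectory_error (M0 C R0 eta theta eps : R) : R :=
  let vmax := / 2 * (M0 + 1) * C in
  let vlim := / 2 * M0 in
  let dv := / 2 * eta * C + vlim * theta in
  (3 * vmax + vlim) * eps + R0 * dv
  + ((6 * vmax ^ 2 + 2 * vlim ^ 2) * eps + 2 * R0 * dv * (vmax + vlim)).

Section Trajectory.
Variables (d1 d2 : R -> R -> R) (dl x1 x2 v1 v2 : R -> R) (eps X1 X2 M0 C eta rho : R).
Hypothesis eps_bounds : 0 < eps <= 1.
Hypothesis dl_cont : forall u, continuity_pt dl u.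
Hypothesis dl_supp : forall u, eps <= Rabs u -> dl u = 0.
Hypothesis dl_mass : RInt (fun u => Rabs (dl u)) (- eps) eps <= C.
Hypotheses (x1_deriv : forall U, derivable_pt_lim x1 U (v1 U))
  (x2_deriv : forall U, derivable_pt_lim x2 U (v2 U)).
Hypotheses (v1_deriv : forall U, derivable_pt_lim v1 U (/ 2 * d1 (x1 U) (x2 U) * dl U))
  (v2_deriv : forall U, derivable_pt_lim v2 U (/ 2 * d2 (x1 U) (x2 U) * dl U)).
Hypotheses (x1_init : x1 (-1) = X1) (x2_init : x2 (-1) = X2)
  (v1_init : v1 (-1) = 0) (v2_init : v2 (-1) = 0).
Hypotheses (d1_bound : Rabs (d1 X1 X2) <= M0) (d2_bound : Rabs (d2 X1 X2) <= M0).
Hypothesis eta_bounds : 0 <= eta <= 1.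
Hypothesis d_modulus : forall Y1 Y2, Rabs (Y1 - X1) + Rabs (Y2 - X2) < rho ->
  Rabs (d1 Y1 Y2 - d1 X1 X2) < eta /\ Rabs (d2 Y1 Y2 - d2 X1 X2) < eta.

Local Notation vmax := (/ 2 * (M0 + 1) * C).
Local Notation vlim := (/ 2 * M0).

Hypothesis kick_short : 4 * vmax * eps < rho / 2.

Let vmax_nonneg : 0 <= vmax.
Proof.
  pose proof (RInt_Rabs_between dl (- eps) eps eps dl_cont ltac:(lra)).
  pose proof (Rabs_pos (d1 X1 X2)).
  apply Rmult_le_pos; [apply Rmult_le_pos|]; lra.
Qed.

Lemma trajectory_before r : r <= - eps -> v1 r = 0 /\ v2 r = 0 /\ x1 r = X1 /\ x2 r = X2.
Proof.
  intros Hr.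
  assert (Hdl : forall c, c <= - eps -> dl c = 0)
    by (intros c Hc; apply dl_supp; rewrite Rabs_left by lra; lra).
  destruct (kicked_before x1 v1 _ dl X1 eps ltac:(lra) x1_deriv v1_deriv Hdl x1_init v1_init r Hr).
  destruct (kicked_before x2 v2 _ dl X2 eps ltac:(lra) x2_deriv v2_deriv Hdl x2_init v2_init r Hr).
  auto.
Qed.

Lemma trajectory_after r : eps <= r ->
  v1 r = v1 eps /\ v2 r = v2 eps /\
  x1 r = x1 eps + v1 eps * (r - eps) /\ x2 r = x2 eps + v2 eps * (r - eps).
Proof.
  intros Hr.
  assert (Hdl : forall c, eps <= c -> dl c = 0)
    by (intros c Hc; apply dl_supp; rewrite Rabs_right by lra; lra).
  destruct (kicked_after x1 v1 _ dl eps x1_deriv v1_deriv Hdl r Hr).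
  destruct (kicked_after x2 v2 _ dl eps x2_deriv v2_deriv Hdl r Hr).
  auto.
Qed.

Lemma trajectory_velocity_bound_while_close t : t <= eps ->
  (forall c, - eps <= c <= t -> Rabs (x1 c - X1) + Rabs (x2 c - X2) < rho) ->
  forall c, - eps <= c <= t ->
    Rabs (v1 c) <= vmax /\ Rabs (v2 c) <= vmax.
Proof.
  intros Ht Hclose.
  assert (Hd : forall c, - eps <= c <= t ->
    Rabs (d1 (x1 c) (x2 c)) <= M0 + 1 /\ Rabs (d2 (x1 c) (x2 c)) <= M0 + 1).
  { intros c Hc. destruct (d_modulus (x1 c) (x2 c) (Hclose c Hc)).
    pose proof (Rabs_triang_sub (d1 (x1 c) (x2 c)) (d1 X1 X2) 0).
    pose proof (Rabs_triang_sub (d2 (x1 c) (x2 c)) (d2 X1 X2) 0).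
    rewrite !Rminus_0_r in *. lra. }
  assert (HM0 : 0 <= M0 + 1) by (pose proof (Rabs_pos (d1 X1 X2)); lra).
  destruct (trajectory_before (- eps)) as [Hv1 [Hv2 _]]; [lra|].
  intros c Hc. split.
  - apply (kick_velocity_bound dl v1 _ eps C dl_cont dl_mass v1_deriv Hv1 _ t); auto.
    intros; apply Hd; auto.
  - apply (kick_velocity_bound dl v2 _ eps C dl_cont dl_mass v2_deriv Hv2 _ t); auto.
    intros; apply Hd; auto.
Qed.

Lemma trajectory_drift_of_velocity_bound t : - eps <= t <= eps ->
  (forall c, - eps <= c <= t ->
     Rabs (v1 c) <= vmax /\ Rabs (v2 c) <= vmax) ->
  Rabs (x1 t - X1) <= 2 * vmax * eps /\
  Rabs (x2 t - X2) <= 2 * vmax * eps.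
Proof.
  intros Ht Hv. pose proof vmax_nonneg as HB. set (B := vmax) in *.
  destruct (trajectory_before (- eps)) as [_ [_ [Hx1 Hx2]]]; [lra|].
  pose proof (deriv_bound_Lipschitz x1 v1 (- eps) t B ltac:(lra) x1_deriv
    ltac:(intros; apply Hv; auto)) as H1.
  pose proof (deriv_bound_Lipschitz x2 v2 (- eps) t B ltac:(lra) x2_deriv
    ltac:(intros; apply Hv; auto)) as H2.
  rewrite Hx1 in H1. rewrite Hx2 in H2.
  assert (B * (t - - eps) <= B * (2 * eps)) by (apply Rmult_le_compat_l; lra). lra.
Qed.

(** A priori bootstrap: while the trajectory stays [rho]-close to [X] its speed is at most
    [vmax], so during the kick it moves by at most [4 vmax eps < rho / 2]. *)
Lemma trajectory_velocity_bound c : - eps <= c <= eps ->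
  Rabs (v1 c) <= vmax /\ Rabs (v2 c) <= vmax.
Proof.
  assert (Hrho : 0 < rho) by (pose proof vmax_nonneg; nra).
  set (phi := fun t => Rabs (x1 t - X1) + Rabs (x2 t - X2)).
  assert (Hstay : forall t, - eps <= t <= eps -> phi t < rho / 2).
  { apply continuous_induction; [lra | | |].
    - intros t.
      assert (Hdist : forall x v X, (forall U, derivable_pt_lim x U (v U)) ->
        continuity_pt (fun t => Rabs (x t - X)) t).
      { intros x v X Hx. apply continuity_pt_Rabs, (continuity_pt_minus x (fun _ => X)).
        - exact (derivable_pt_lim_continuity_pt _ _ _ (Hx t)).
        - apply continuity_pt_const. intros ??; reflexivity. }
      apply (continuity_pt_plus (fun t => Rabs (x1 t - X1)) (fun t => Rabs (x2 t - X2)));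
        eapply Hdist; eauto.
    - unfold phi. destruct (trajectory_before (- eps)) as [_ [_ [-> ->]]]; [lra|].
      unfold Rminus; rewrite !Rplus_opp_r, Rabs_R0. lra.
    - intros t Ht Hpre.
      assert (Hspeed : forall c, - eps <= c <= t ->
        Rabs (v1 c) <= vmax /\ Rabs (v2 c) <= vmax).
      { apply (trajectory_velocity_bound_while_close t); [lra|].
        intros r Hr. pose proof (Hpre r Hr). unfold phi in *. lra. }
      destruct (trajectory_drift_of_velocity_bound t Ht Hspeed). unfold phi. lra. }
  apply (trajectory_velocity_bound_while_close eps); [lra|].
  intros r Hr. pose proof (Hstay r Hr). unfold phi in *. lra.
Qed.

Lemma trajectory_drift r : - eps <= r <= eps ->
  Rabs (x1 r - X1) <= 2 * vmax * eps /\
  Rabs (x2 r - X2) <= 2 * vmax * eps.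
Proof.
  intros Hr. apply trajectory_drift_of_velocity_bound; auto.
  intros c Hc. apply trajectory_velocity_bound. lra.
Qed.

Let vlim_nonneg : 0 <= vlim.
Proof. pose proof (Rabs_pos (d1 X1 X2)). lra. Qed.

Lemma trajectory_exit_velocity theta : Rabs (RInt dl (- eps) eps - 1) <= theta ->
  Rabs (v1 eps - / 2 * d1 X1 X2) <= / 2 * eta * C + vlim * theta /\
  Rabs (v2 eps - / 2 * d2 X1 X2) <= / 2 * eta * C + vlim * theta.
Proof.
  intros Hth.
  assert (Hth0 : 0 <= theta) by (pose proof (Rabs_pos (RInt dl (- eps) eps - 1)); lra).
  assert (Hd : forall c, - eps <= c <= eps ->
    Rabs (d1 (x1 c) (x2 c) - d1 X1 X2) <= eta /\ Rabs (d2 (x1 c) (x2 c) - d2 X1 X2) <= eta).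
  { intros c Hc. destruct (trajectory_drift c Hc). pose proof vmax_nonneg.
    destruct (d_modulus (x1 c) (x2 c)); [nra | lra]. }
  destruct (trajectory_before (- eps)) as [Hv1 [Hv2 _]]; [lra|].
  assert (Hhalf : forall d, Rabs d <= M0 -> Rabs (/ 2 * d) * theta <= vlim * theta).
  { intros d Hd'. apply Rmult_le_compat_r; [lra|].
    rewrite Rabs_mult, Rabs_right by lra. lra. }
  split.
  - eapply Rle_trans; [|apply Rplus_le_compat_l, (Hhalf _ d1_bound)].
    apply (kick_exit_velocity dl v1 _ eps C ltac:(lra) dl_cont dl_mass v1_deriv Hv1 _ eta theta);
      [lra | exact Hth |]. intros c Hc; apply Hd; auto.
  - eapply Rle_trans; [|apply Rplus_le_compat_l, (Hhalf _ d2_bound)].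
    apply (kick_exit_velocity dl v2 _ eps C ltac:(lra) dl_cont dl_mass v2_deriv Hv2 _ eta theta);
      [lra | exact Hth |]. intros c Hc; apply Hd; auto.
Qed.

Section Limit.
Variables (R0 theta U : R).
Hypothesis U_bound : Rabs U <= R0.
Hypothesis dl_norm : Rabs (RInt dl (- eps) eps - 1) <= theta.

Local Notation dv := (/ 2 * eta * C + vlim * theta).

Let dv_nonneg : 0 <= dv.
Proof.
  pose proof (RInt_Rabs_between dl (- eps) eps eps dl_cont ltac:(lra)).
  pose proof (Rabs_pos (RInt dl (- eps) eps - 1)).
  assert (0 <= eta * C) by (apply Rmult_le_pos; lra).
  assert (0 <= vlim * theta) by (apply Rmult_le_pos; [apply vlim_nonneg | lra]). lra.
Qed.

Lemma trajectory_position_error :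
  Rabs (x1 U - (X1 + / 2 * d1 X1 X2 * Upos U)) <= (3 * vmax + vlim) * eps + R0 * dv /\
  Rabs (x2 U - (X2 + / 2 * d2 X1 X2 * Upos U)) <= (3 * vmax + vlim) * eps + R0 * dv.
Proof.
  destruct (trajectory_exit_velocity theta dl_norm) as [Hex1 Hex2].
  destruct (trajectory_velocity_bound eps) as [Hb1 Hb2]; [lra|].
  assert (HA : forall d, Rabs d <= M0 -> Rabs (/ 2 * d) <= vlim)
    by (intros; rewrite Rabs_mult, Rabs_right; lra).
  split; [apply (piecewise_position_error x1 X1 _ eps vmax vlim dv R0 U (v1 eps))
         |apply (piecewise_position_error x2 X2 _ eps vmax vlim dv R0 U (v2 eps))];
    auto; try lra; intros r Hr;
    first [apply trajectory_before | apply trajectory_drift | apply trajectory_after]; auto.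
Qed.

Lemma trajectory_energy_error :
  Rabs (RInt (fun s => v1 s ^ 2 + v2 s ^ 2) (- eps) U
        - / 4 * (d1 X1 X2 ^ 2 + d2 X1 X2 ^ 2) * Upos U)
    <= (6 * vmax ^ 2 + 2 * vlim ^ 2) * eps + 2 * R0 * dv * (vmax + vlim).
Proof.
  destruct (trajectory_exit_velocity theta dl_norm) as [Hex1 Hex2].
  destruct (trajectory_velocity_bound eps) as [Hb1 Hb2]; [lra|].
  assert (HA : forall d, Rabs d <= M0 -> Rabs (/ 2 * d) <= vlim)
    by (intros; rewrite Rabs_mult, Rabs_right; lra).
  assert (Hw : forall s, continuity_pt (fun s => v1 s ^ 2 + v2 s ^ 2) s).
  { intros s. eapply derivable_pt_lim_continuity_pt,
      (derivable_pt_lim_plus (fun s => v1 s ^ 2) (fun s => v2 s ^ 2));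
      apply derivable_pt_lim_sq; eauto. }
  replace (/ 4 * (d1 X1 X2 ^ 2 + d2 X1 X2 ^ 2))
    with ((/ 2 * d1 X1 X2) ^ 2 + (/ 2 * d2 X1 X2) ^ 2) by field.
  apply (piecewise_energy_error _ (fun s => v1 s ^ 2 + v2 s ^ 2) eps vmax vlim dv R0 U
    (v1 eps) (v2 eps)); auto; try lra.
  - intros s. apply (derivable_pt_lim_RInt _ Hw).
  - apply RInt_same, Hw.
  - intros s Hs. destruct (trajectory_before s) as [-> [-> _]]; auto. ring.
  - intros s Hs. destruct (trajectory_velocity_bound s Hs) as [Hs1 Hs2].
    pose proof (Rabs_sq_le _ _ Hs1). pose proof (Rabs_sq_le _ _ Hs2).
    pose proof (pow2_ge_0 (v1 s)). pose proof (pow2_ge_0 (v2 s)).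
    rewrite Rabs_right; lra.
  - intros s Hs. destruct (trajectory_after s) as [-> [-> _]]; auto.
Qed.

Lemma trajectory_limit_error :
  let E := trajectory_error M0 C R0 eta theta eps in
  Rabs (x1 U - (X1 + / 2 * d1 X1 X2 * Upos U)) <= E /\
  Rabs (x2 U - (X2 + / 2 * d2 X1 X2 * Upos U)) <= E /\
  Rabs (RInt (fun s => v1 s ^ 2 + v2 s ^ 2) (- eps) U
        - / 4 * (d1 X1 X2 ^ 2 + d2 X1 X2 ^ 2) * Upos U) <= E.
Proof.
  unfold trajectory_error. cbv zeta.
  destruct trajectory_position_error as [Hx1 Hx2]. pose proof trajectory_energy_error as Hen.
  pose proof vmax_nonneg. pose proof vlim_nonneg. pose proof dv_nonneg.
  assert (0 <= R0) by (pose proof (Rabs_pos U); lra).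
  assert (0 <= R0 * dv * (vmax + vlim)) by (apply Rmult_le_pos; [apply Rmult_le_pos|]; lra).
  assert (0 <= R0 * dv) by (apply Rmult_le_pos; lra).
  pose proof (pow2_ge_0 vmax). pose proof (pow2_ge_0 vlim).
  repeat split; nra.
Qed.

End Limit.

End Trajectory.

(** Since [(v_i^2)' = k_i v_i dl], the integral defining [w_eps] is a kinetic energy. *)
Lemma kinetic_energy_identity (k1 k2 dl v1 v2 : R -> R) a :
  (forall r, continuity_pt k1 r) -> (forall r, continuity_pt k2 r) ->
  (forall r, continuity_pt dl r) ->
  (forall U, derivable_pt_lim v1 U (/ 2 * k1 U * dl U)) ->
  (forall U, derivable_pt_lim v2 U (/ 2 * k2 U * dl U)) ->
  forall s, RInt (fun r => (k1 r * v1 r + k2 r * v2 r) * dl r) a s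
            = v1 s ^ 2 + v2 s ^ 2 - (v1 a ^ 2 + v2 a ^ 2).
Proof.
  intros Hk1 Hk2 Hdl Hv1 Hv2 s.
  set (g := fun r => (k1 r * v1 r + k2 r * v2 r) * dl r).
  assert (Hg : forall r, continuity_pt g r).
  { intros r. pose proof (derivable_pt_lim_continuity_pt _ _ _ (Hv1 r)).
    pose proof (derivable_pt_lim_continuity_pt _ _ _ (Hv2 r)).
    apply continuity_pt_mult; auto.
    apply continuity_pt_plus; apply continuity_pt_mult; auto. }
  assert (Hconst : RInt g a s - (v1 s ^ 2 + v2 s ^ 2) = RInt g a a - (v1 a ^ 2 + v2 a ^ 2));
    [|rewrite RInt_same in Hconst; auto; lra].
  apply (deriv_zero_const (fun t => RInt g a t - (v1 t ^ 2 + v2 t ^ 2))). intros c _.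
  apply (derivable_pt_lim_eq _ _ (g c - (2 * v1 c * (/ 2 * k1 c * dl c)
                                         + 2 * v2 c * (/ 2 * k2 c * dl c)))).
  - apply derivable_pt_lim_minus; [apply (derivable_pt_lim_RInt _ Hg)|].
    apply (derivable_pt_lim_plus (fun s => v1 s ^ 2) (fun s => v2 s ^ 2));
      apply derivable_pt_lim_sq; auto.
  - unfold g. field.
Qed.

Lemma dist4_s_eps_le (df1 df2 : R -> R -> R) (delta : R -> R -> R)
  (x1 x2 xd1 xd2 : R -> R -> R -> R -> R) eps M0 C R0 eta theta rho U X1 X2 V :
  0 < eps <= 1 -> cont2 df1 -> cont2 df2 ->
  (forall u, continuity_pt (delta eps) u) -> (forall u, eps < Rabs u -> delta eps u = 0) ->
  RInt (fun u => Rabs (delta eps u)) (- eps) eps <= C ->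
  Rabs (RInt (delta eps) (- eps) eps - 1) <= theta ->
  (forall U,
      derivable_pt_lim (fun u => x1 eps X1 X2 u) U (xd1 eps X1 X2 U) /\
      derivable_pt_lim (fun u => x2 eps X1 X2 u) U (xd2 eps X1 X2 U)) ->
  (forall U,
      derivable_pt_lim (fun u => xd1 eps X1 X2 u) U
        (/ 2 * df1 (x1 eps X1 X2 U) (x2 eps X1 X2 U) * delta eps U) /\
      derivable_pt_lim (fun u => xd2 eps X1 X2 u) U
        (/ 2 * df2 (x1 eps X1 X2 U) (x2 eps X1 X2 U) * delta eps U)) /\
    x1 eps X1 X2 (-1) = X1 /\ x2 eps X1 X2 (-1) = X2 /\
    xd1 eps X1 X2 (-1) = 0 /\ xd2 eps X1 X2 (-1) = 0 ->
  Rabs (df1 X1 X2) <= M0 -> Rabs (df2 X1 X2) <= M0 -> 0 <= eta <= 1 ->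
  (forall Y1 Y2, Rabs (Y1 - X1) + Rabs (Y2 - X2) < rho ->
     Rabs (df1 Y1 Y2 - df1 X1 X2) < eta /\ Rabs (df2 Y1 Y2 - df2 X1 X2) < eta) ->
  4 * (/ 2 * (M0 + 1) * C) * eps < rho / 2 -> Rabs U <= R0 ->
  dist4 (s_eps df1 df2 delta x1 x2 xd1 xd2 eps (U, X1, X2, V)) (s_lim df1 df2 (U, X1, X2, V))
    <= trajectory_error M0 C R0 eta theta eps.
Proof.
  intros Heps Hc1 Hc2 Hdl Hsupp Hmass Hth Hx [Hv [Hi1 [Hi2 [Hi3 Hi4]]]] HM1 HM2 Heta Hmod
    Hshort HU.
  set (y1 := x1 eps X1 X2). set (y2 := x2 eps X1 X2).
  set (u1 := xd1 eps X1 X2). set (u2 := xd2 eps X1 X2).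
  assert (Hx1 : forall U, derivable_pt_lim y1 U (u1 U)) by apply Hx.
  assert (Hx2 : forall U, derivable_pt_lim y2 U (u2 U)) by apply Hx.
  assert (Hv1 : forall U, derivable_pt_lim u1 U (/ 2 * df1 (y1 U) (y2 U) * delta eps U))
    by apply Hv.
  assert (Hv2 : forall U, derivable_pt_lim u2 U (/ 2 * df2 (y1 U) (y2 U) * delta eps U))
    by apply Hv.
  assert (Hsupp' := continuous_zero_outside _ eps Hdl Hsupp).
  assert (Henergy : forall s,
    RInt (fun r => (df1 (y1 r) (y2 r) * u1 r + df2 (y1 r) (y2 r) * u2 r) * delta eps r)
      (- eps) s = u1 s ^ 2 + u2 s ^ 2).
  { intros s. destruct (trajectory_before df1 df2 (delta eps) y1 y2 u1 u2 eps X1 X2 Heps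
      Hsupp' Hx1 Hx2 Hv1 Hv2 Hi1 Hi2 Hi3 Hi4 (- eps)) as [Hu1 [Hu2 _]]; [lra|].
    rewrite (kinetic_energy_identity _ _ _ u1 u2); auto; [rewrite Hu1, Hu2; ring | |];
      intros r; apply continuity_pt_cont2; auto;
      eapply derivable_pt_lim_continuity_pt; [apply Hx1 | apply Hx2 | apply Hx1 | apply Hx2]. }
  destruct (trajectory_limit_error df1 df2 (delta eps) y1 y2 u1 u2 eps X1 X2 M0 C eta rho
    Heps Hdl Hsupp' Hmass Hx1 Hx2 Hv1 Hv2 Hi1 Hi2 Hi3 Hi4 HM1 HM2 Heta Hmod Hshort R0 theta U HU Hth)
    as [E1 [E2 E3]].
  unfold s_eps, s_lim, w_eps. fold y1 y2 u1 u2.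
  rewrite (functional_extensionality _ _ Henergy).
  apply dist4_le; auto.
  - unfold Rminus; rewrite Rplus_opp_r, Rabs_R0. eapply Rle_trans; [apply Rabs_pos | exact E1].
  - replace (V + RInt (fun s => u1 s ^ 2 + u2 s ^ 2) (- eps) U
              - (V + / 4 * (df1 X1 X2 ^ 2 + df2 X1 X2 ^ 2) * Upos U))
      with (RInt (fun s => u1 s ^ 2 + u2 s ^ 2) (- eps) U
              - / 4 * (df1 X1 X2 ^ 2 + df2 X1 X2 ^ 2) * Upos U) by ring.
    exact E3.
Qed.

(** * Uniformity in [eps] *)

Definition for_small_eps (P : R -> Prop) : Prop :=
  exists e0, 0 < e0 /\ forall eps, 0 < eps <= 1 -> eps <= e0 -> P eps.

Lemma for_small_eps_and (P Q : R -> Prop) :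
  for_small_eps P -> for_small_eps Q -> for_small_eps (fun eps => P eps /\ Q eps).
Proof.
  intros [e1 [He1 HP]] [e2 [He2 HQ]]. exists (Rmin e1 e2). split; [apply Rmin_pos; auto|].
  intros eps Heps Hle. pose proof (Rmin_l e1 e2). pose proof (Rmin_r e1 e2).
  split; [apply HP | apply HQ]; auto; lra.
Qed.

Lemma for_small_eps_impl (P Q : R -> Prop) :
  for_small_eps P -> (forall eps, 0 < eps <= 1 -> P eps -> Q eps) -> for_small_eps Q.
Proof. intros [e0 [He0 HP]] HPQ. exists e0. split; auto. Qed.

Lemma for_small_eps_linear k c : 0 <= k -> 0 < c -> for_small_eps (fun eps => k * eps < c).
Proof.
  intros Hk Hc. exists (c / (k + 1)). split; [apply Rdiv_lt_0_compat; lra|].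
  intros eps Heps Hle. apply (Rmult_le_compat_r (k + 1)) in Hle; [|lra].
  replace (c / (k + 1) * (k + 1)) with c in Hle by (field; lra). nra.
Qed.

Lemma trajectory_error_small M0 C R0 t : 0 <= M0 -> 0 <= C -> 0 <= R0 -> 0 < t ->
  exists eta theta, 0 < eta <= 1 /\ 0 < theta /\
    for_small_eps (fun eps => trajectory_error M0 C R0 eta theta eps < t).
Proof.
  intros HM0 HC HR0 Ht. unfold trajectory_error.
  set (B := / 2 * (M0 + 1) * C). set (a := / 2 * M0).
  assert (HB : 0 <= B) by (apply Rmult_le_pos; [apply Rmult_le_pos|]; lra).
  assert (Ha : 0 <= a) by (unfold a; lra).
  set (P := R0 * (1 + 2 * (B + a))).
  assert (HP : 0 <= P) by (apply Rmult_le_pos; lra).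
  set (eta := Rmin 1 (t / (2 * (P * C + 1)))).
  set (theta := t / (4 * (P * a + 1))).
  assert (Heta : 0 < eta <= 1).
  { split; [apply Rmin_pos; [lra | apply Rdiv_lt_0_compat; nra] | apply Rmin_l]. }
  assert (Hetab : eta * (P * C + 1) <= t / 2).
  { pose proof (Rmin_r 1 (t / (2 * (P * C + 1)))) as Hr. fold eta in Hr.
    apply (Rmult_le_compat_r (P * C + 1)) in Hr; [|nra].
    replace (t / (2 * (P * C + 1)) * (P * C + 1)) with (t / 2) in Hr by (field; nra). lra. }
  assert (Htheta : theta * (P * a + 1) = t / 4) by (unfold theta; field; nra).
  assert (0 < theta) by (unfold theta; apply Rdiv_lt_0_compat; nra).
  exists eta, theta. repeat split; try lra.
  apply (for_small_eps_impl _ _ (for_small_eps_linear (3 * B + a + (6 * B ^ 2 + 2 * a ^ 2))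
    (t / 4)  ltac:(pose proof (pow2_ge_0 B); pose proof (pow2_ge_0 a); lra) ltac:(lra))).
  intros eps Heps Hlin.
  assert (eta * (P * C) <= eta * (P * C + 1)) by (apply Rmult_le_compat_l; lra).
  assert (theta * (P * a) <= theta * (P * a + 1)) by (apply Rmult_le_compat_l; lra).
  assert (Hsplit : (3 * B + a) * eps + R0 * (/ 2 * eta * C + a * theta) +
    ((6 * B ^ 2 + 2 * a ^ 2) * eps + 2 * R0 * (/ 2 * eta * C + a * theta) * (B + a))
    = (3 * B + a + (6 * B ^ 2 + 2 * a ^ 2)) * eps + (/ 2 * (eta * (P * C)) + theta * (P * a)))
    by (unfold P; ring).
  rewrite Hsplit. lra.
Qed.

Lemma compact_gradient_control (K : R * R -> Prop) (d1 d2 : R -> R -> R) :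
  is_compact dist2 K -> cont2 d1 -> cont2 d2 ->
  exists M0, 0 <= M0 /\
    (forall X1 X2, K (X1, X2) -> Rabs (d1 X1 X2) <= M0 /\ Rabs (d2 X1 X2) <= M0) /\
    forall eta, 0 < eta -> exists rho, 0 < rho /\ forall X1 X2, K (X1, X2) -> forall Y1 Y2,
      Rabs (Y1 - X1) + Rabs (Y2 - X2) < rho ->
      Rabs (d1 Y1 Y2 - d1 X1 X2) < eta /\ Rabs (d2 Y1 Y2 - d2 X1 X2) < eta.
Proof.
  intros HK Hc1 Hc2.
  destruct (compact_cont2_bounded K d1 HK Hc1) as [M1 [HM1 Hb1]].
  destruct (compact_cont2_bounded K d2 HK Hc2) as [M2 [HM2 Hb2]].
  exists (Rmax M1 M2). split; [pose proof (Rmax_l M1 M2); lra|]. split.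
  - intros X1 X2 HX. pose proof (Rmax_l M1 M2). pose proof (Rmax_r M1 M2).
    pose proof (Hb1 X1 X2 HX). pose proof (Hb2 X1 X2 HX). lra.
  - intros eta Heta.
    destruct (compact_cont2_uniform K d1 HK Hc1 eta Heta) as [r1 [Hr1 Hu1]].
    destruct (compact_cont2_uniform K d2 HK Hc2 eta Heta) as [r2 [Hr2 Hu2]].
    exists (Rmin r1 r2). split; [apply Rmin_pos; auto|].
    intros X1 X2 HX Y1 Y2 HY. pose proof (dist2_le_sum X1 X2 Y1 Y2).
    pose proof (Rmin_l r1 r2). pose proof (Rmin_r r1 r2).
    split; [apply (Hu1 (X1, X2) (Y1, Y2)) | apply (Hu2 (X1, X2) (Y1, Y2))]; auto; lra.
Qed.

Theorem proposition7p3
  (f df1 df2 : R -> R -> R) (delta : R -> R -> R)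
  (x1 x2 xd1 xd2 : R -> R -> R -> R -> R) :
  smooth2 f -> pd2 f true df1 -> pd2 f false df2 ->
  strict_delta_net delta ->
  (forall eps, 0 < eps <= 1 -> smooth3 (x1 eps) /\ smooth3 (x2 eps)) ->
  (forall eps, 0 < eps <= 1 -> forall X1 X2 U,
      derivable_pt_lim (fun u => x1 eps X1 X2 u) U (xd1 eps X1 X2 U) /\
      derivable_pt_lim (fun u => x2 eps X1 X2 u) U (xd2 eps X1 X2 U)) ->
  (forall K : R * R -> Prop, is_compact dist2 K ->
     exists epsK, 0 < epsK /\ forall eps, 0 < eps <= 1 -> eps <= epsK ->
       forall X1 X2, K (X1, X2) ->
         (forall U,
            derivable_pt_lim (fun u => xd1 eps X1 X2 u) U
              (/ 2 * df1 (x1 eps X1 X2 U) (x2 eps X1 X2 U) * delta eps U) /\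
            derivable_pt_lim (fun u => xd2 eps X1 X2 u) U
              (/ 2 * df2 (x1 eps X1 X2 U) (x2 eps X1 X2 U) * delta eps U)) /\
         x1 eps X1 X2 (-1) = X1 /\ x2 eps X1 X2 (-1) = X2 /\
         xd1 eps X1 X2 (-1) = 0 /\ xd2 eps X1 X2 (-1) = 0) ->
  forall K : R * R * R * R -> Prop, is_compact dist4 K ->
    forall eta, 0 < eta -> exists e0, 0 < e0 /\
      forall eps, 0 < eps <= 1 -> eps <= e0 ->
        forall p, K p ->
          dist4 (s_eps df1 df2 delta x1 x2 xd1 xd2 eps p) (s_lim df1 df2 p) < eta.
Proof.
  intros Hf Hpd1 Hpd2 [Hsmooth [Hsupp [Hint [C [e1 [HC [He1 Hmass]]]]]]] _ Hder Hivp
    K HK eta Heta.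
  pose proof (cont2_of_partial_derivative f df1 true Hf Hpd1) as Hc1.
  pose proof (cont2_of_partial_derivative f df2 false Hf Hpd2) as Hc2.
  pose proof (compact_middle_proj K HK) as HK2.
  destruct (compact_first_bounded K HK) as [R0 [HR0 HU]].
  destruct (compact_gradient_control _ df1 df2 HK2 Hc1 Hc2) as [M0 [HM0 [Hbound Hmod]]].
  destruct (trajectory_error_small M0 C R0 eta) as [et [th [Het [Hth Herr]]]]; try lra.
  destruct (Hmod et) as [rho [Hrho Hclose]]; [lra|].
  assert (Hshort : for_small_eps (fun eps => 4 * (/ 2 * (M0 + 1) * C) * eps < rho / 2))
    by (apply for_small_eps_linear; [repeat apply Rmult_le_pos |]; lra).
  assert (Hmass' : for_small_eps (fun eps => RInt (fun u => Rabs (delta eps u)) (- eps) eps <= C))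
    by (exists e1; auto).
  apply (for_small_eps_impl _ _ (for_small_eps_and _ _ (Hivp _ HK2) (for_small_eps_and _ _
    (for_small_eps_and _ _ Hmass' (Hint th Hth)) (for_small_eps_and _ _ Herr Hshort)))).
  intros eps Heps [Htraj [[Hm Hn] [He Hs]]] [[[U X1] X2] V] Hp.
  assert (HX : middle_proj K (X1, X2)) by (exists U, V; exact Hp).
  eapply Rle_lt_trans; [|exact He].
  destruct (Hbound X1 X2 HX) as [HM1 HM2].
  apply (dist4_s_eps_le df1 df2 delta x1 x2 xd1 xd2 eps M0 C R0 et th rho U X1 X2 V Heps Hc1 Hc2
    (smooth1_continuity_pt _ (Hsmooth eps Heps)) (Hsupp eps Heps) Hm (Rlt_le _ _ Hn)
    (Hder eps Heps X1 X2) (Htraj X1 X2 HX) HM1 HM2 ltac:(lra) (Hclose X1 X2 HX) Hs (HU _ _ _ _ Hp)).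
Qed.
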